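(* Let $(a_n)_n=[a_{n\varepsilon}]_{\mathrm s}$, $(b_n)_n=[b_{n\varepsilon}]_{\mathrm s}\in\widetilde{\mathbb R}_{\mathrm s}$ with $(a_n)_n\ge0$ and $(b_n)_n\ge0$, and assume that there exists $N\in\mathbb N$ such that $(a_{n+N})_n\le(b_{n+N})_n$, where $(a_{n+N})_n:=[a_{n+N,\varepsilon}]_{\mathrm s}$ and similarly for $b$. Then: (i) if the hyperseries $\sum_{n\in\widetilde{\mathbb N}}b_n$ converges, then so does $\sum_{n\in\widetilde{\mathbb N}}a_n$; (ii) if $\sum_{n\in\widetilde{\mathbb N}}a_n$ diverges to $+\infty$, then so does $\sum_{n\in\widetilde{\mathbb N}}b_n$.
   Context: Fix $I=(0,1]$ and a gauge $\rho=(\rho_\varepsilon)_{\varepsilon\in I}$ with $\rho_\varepsilon\in I$ and $\rho_\varepsilon\to0$ as $\varepsilon\to0$. ''$\forall^0\varepsilon$'' means ''for all sufficiently small $\varepsilon\in I$''. A net $(x_\varepsilon)\in\mathbb C^I$ is $\rho$-moderate ($(x_\varepsilon)\in\mathbb C_\rho$) if $\exists N\in\mathbb N\,\forall^0\varepsilon:|x_\varepsilon|\le\rho_\varepsilon^{-N}$, and $\rho$-negligible if $\forall q\in\mathbb N\,\forall^0\varepsilon:|x_\varepsilon|\le\rho_\varepsilon^q$. $\widetilde{\mathbb C}:=\mathbb C_\rho/\{\text{negligible nets}\}$ with classes $[x_\varepsilon]$; $\widetilde{\mathbb R}\subseteq\widetilde{\mathbb C}$ consists of classes of real moderate nets; $\mathrm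 d\rho:=[\rho_\varepsilon]$, $|[z_\varepsilon]|:=[|z_\varepsilon|]$. On $\widetilde{\mathbb R}$: $[x_\varepsilon]\le[y_\varepsilon]$ iff $x_\varepsilon\le y_\varepsilon+z_\varepsilon$ $\forall^0\varepsilon$ for some negligible $(z_\varepsilon)$; $x<y$ iff $\exists m\,\forall^0\varepsilon:y_\varepsilon-x_\varepsilon>\rho_\varepsilon^m$. Hypernatural numbers: $\widetilde{\mathbb N}:=\{[n_\varepsilon]\in\widetilde{\mathbb R}:n_\varepsilon\in\mathbb N\ \forall\varepsilon\}$; for each $N\in\widetilde{\mathbb N}$ a representative $(\mathrm{ni}(N)_\varepsilon)$ with all $\mathrm{ni}(N)_\varepsilon\in\mathbb N$ is fixed. Hyperlimit: for a map $n\in\widetilde{\mathbb N}\mapsto a_n\in\widetilde{\mathbb C}$, $l=\lim_{n\in\widetilde{\mathbb N}}a_n$ means $\forall q\in\mathbb N\,\exists M\in\widetilde{\mathbb N}\,\forall n\in\widetilde{\mathbb N}:n\ge M\Rightarrow|a_n-l|<\mathrm d\rho^q$. Hyperseries: a net $(a_{n\varepsilon})_{n\in\mathbb N,\varepsilon\in I}$ of complex numbers is moderate over hypersums if for every $N\in\widetilde{\mathbb N}$ the net $(\sum_{n=0}^{\mathrm{ni}(N)_\varepsilon}a_{n\varepsilon})_\varepsilon$ is $\rho$-moderate; two such nets $(a_{n\varepsilon}),(\bar a_{n\varepsilon})$ are equivalent if for all $N,M\in\widetilde{\mathbb N}$ the net $(\sum_{n=\mathrm{ni}(N)_\varepsilon}^{\mathrm{ni}(M)_\varepsilon}(a_{n\varepsilon}-\bar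 a_{n\varepsilon}))_\varepsilon$ is negligible. The quotient is $\widetilde{\mathbb C}_{\mathrm s}$ (resp. $\widetilde{\mathbb R}_{\mathrm s}$ for real nets), with classes $(a_n)_n=[a_{n\varepsilon}]_{\mathrm s}$. For $N,M\in\widetilde{\mathbb N}$, $\sum_{n=N}^Ma_n:=[\sum_{n=\mathrm{ni}(N)_\varepsilon}^{\mathrm{ni}(M)_\varepsilon}a_{n\varepsilon}]$ (empty sums equal $0$). The hyperseries $\sum_{n\in\widetilde{\mathbb N}}a_n$ converges to $s$ if $s=\lim_{N\in\widetilde{\mathbb N}}\sum_{n=0}^Na_n$ exists in $\widetilde{\mathbb C}$; it diverges to $+\infty$ if for every $K\in\widetilde{\mathbb R}$ there is $M\in\widetilde{\mathbb N}$ with $\sum_{n=0}^Na_n>K$ for all $N\in\widetilde{\mathbb N}_{\ge M}$. Order on $\widetilde{\mathbb R}_{\mathrm s}$: $(a_n)_n\le(b_n)_n$ iff $\sum_{n=N}^Ma_n\le\sum_{n=N}^Mb_n$ in $\widetilde{\mathbb R}$ for all $N,M\in\widetilde{\mathbb N}$; $(a_n)_n\ge0$ means $0\le(a_n)_n$. *)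

From Stdlib Require Import Reals Lra Lia.
Open Scope R_scope.

(* A net over I = (0,1] is a function R -> R (values outside I irrelevant). *)

Definition ev (P : R -> Prop) : Prop :=
  exists e0, 0 < e0 /\ forall e, 0 < e <= 1 -> e <= e0 -> P e.

Definition gauge (rho : R -> R) : Prop :=
  (forall e, 0 < e <= 1 -> 0 < rho e <= 1) /\
  (forall d, 0 < d -> ev (fun e => rho e < d)).

Definition moderate (rho x : R -> R) : Prop :=
  exists N : nat, ev (fun e => Rabs (x e) <= / (rho e ^ N)).

Definition negligible (rho x : R -> R) : Prop :=
  forall q : nat, ev (fun e => Rabs (x e) <= rho e ^ q).

Definition gle (rho x y : R -> R) : Prop :=
  exists z, negligible rho z /\ ev (fun e => x e <= y e + z e).

Definition glt (rho x y : R -> R) : Prop :=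
  exists m : nat, ev (fun e => y e - x e > rho e ^ m).

Definition hypnat (rho : R -> R) (n : R -> nat) : Prop :=
  moderate rho (fun e => INR (n e)).

Definition hnle (rho : R -> R) (n m : R -> nat) : Prop :=
  gle rho (fun e => INR (n e)) (fun e => INR (m e)).

Definition rsum (f : nat -> R) (m n : nat) : R :=
  if (m <=? n)%nat then sum_f_R0 (fun i => f (m + i)%nat) (n - m) else 0.

Definition hsum (a : nat -> R -> R) (N M : R -> nat) : R -> R :=
  fun e => rsum (fun k => a k e) (N e) (M e).

Definition zero_net : R -> nat := fun _ => 0%nat.

(* (a_{n eps}) is moderate over hypersums, i.e. represents an element of R~_s *)
Definition hs_moderate (rho : R -> R) (a : nat -> R -> R) : Prop :=
  forall N, hypnat rho N -> moderate rho (hsum a zero_net N).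

Definition hs_le (rho : R -> R) (a b : nat -> R -> R) : Prop :=
  forall N M, hypnat rho N -> hypnat rho M ->
    gle rho (hsum a N M) (hsum b N M).

Definition hs_zero : nat -> R -> R := fun _ _ => 0.

Definition shift (K : nat) (a : nat -> R -> R) : nat -> R -> R :=
  fun n e => a (n + K)%nat e.

Definition cmod (x y : R) : R := sqrt (x * x + y * y).

(* sum_{n in N~} a_n converges (hyperlimit in C~ of partial sums,
   limit l = [lr_eps + i li_eps]) *)
Definition hs_converges (rho : R -> R) (a : nat -> R -> R) : Prop :=
  exists lr li : R -> R, moderate rho lr /\ moderate rho li /\
    forall q : nat, exists M, hypnat rho M /\
      forall N, hypnat rho N -> hnle rho M N ->
        glt rho (fun e => cmod (hsum a zero_net N e - lr e) (- li e))
                (fun e => rho e ^ q).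

Definition hs_diverges (rho : R -> R) (a : nat -> R -> R) : Prop :=
  forall K : R -> R, moderate rho K ->
    exists M, hypnat rho M /\
      forall N, hypnat rho N -> hnle rho M N ->
        glt rho K (hsum a zero_net N).

From Stdlib Require Import Reals Lra Lia ClassicalEpsilon.
Open Scope R_scope.

(* The tails of [a] beyond the index [K] lie between [0] and the tails of [b],
   up to nets bounded by every power of [rho].  Hence if the partial sums of [b]
   are sharply Cauchy, so are those of [a] (losing one power of [rho]); along an
   increasing sequence of hypernatural indices [P p] this yields nets [x p] with
   [|x q - x p| <= rho ^ p] eventually, and the limit is glued together from the
   [x q] on shrinking intervals of [e] where the first [q] of these bounds hold
   simultaneously.  Divergence is immediate: beyond [K] the partial sums of [b]
   exceed those of [a] minus the constant [sum_(n <= K) a_n] and a negligible net. *)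

Local Notation psum a N := (hsum a zero_net N).

Lemma ev_and (P Q : R -> Prop) : ev P -> ev Q -> ev (fun e => P e /\ Q e).
Proof.
  intros [e1 [He1 HP]] [e2 [He2 HQ]]. exists (Rmin e1 e2). split.
  - now apply Rmin_pos.
  - intros e He Hle. split.
    + apply HP; [exact He | eapply Rle_trans; [exact Hle | apply Rmin_l]].
    + apply HQ; [exact He | eapply Rle_trans; [exact Hle | apply Rmin_r]].
Qed.

Lemma ev_mono (P Q : R -> Prop) :
  ev P -> (forall e, 0 < e <= 1 -> P e -> Q e) -> ev Q.
Proof. intros [e0 [He0 HP]] HPQ. exists e0. split; auto. Qed.

Lemma ev_all (P : R -> Prop) : (forall e, 0 < e <= 1 -> P e) -> ev P.
Proof. intros HP. exists 1. split; [lra | auto]. Qed.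

Lemma ev_forall_le (P : nat -> R -> Prop) q :
  (forall p, (p <= q)%nat -> ev (P p)) ->
  ev (fun e => forall p, (p <= q)%nat -> P p e).
Proof.
  induction q as [|q IHq]; intros HP.
  - apply (ev_mono _ _ (HP 0%nat (le_n 0))).
    intros e _ H0 p Hp. replace p with 0%nat by lia. exact H0.
  - apply (ev_mono _ _ (ev_and _ _ (IHq (fun p Hp => HP p ltac:(lia))) (HP (S q) (le_n _)))).
    intros e _ [Hle HS] p Hp.
    destruct (Nat.eq_dec p (S q)) as [-> | Hne]; [exact HS | apply Hle; lia].
Qed.

Lemma pow_succ_le_half r n : 0 <= r <= / 2 -> r ^ S n <= / 2 * r ^ n.
Proof. intros Hr. simpl. pose proof (pow_le r n (proj1 Hr)). nra. Qed.

Lemma Rabs_le_cmod x y : Rabs x <= cmod x y.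
Proof.
  unfold cmod. rewrite <- sqrt_Rsqr_abs. apply sqrt_le_1_alt. unfold Rsqr. nra.
Qed.

Lemma cmod_real x : cmod x (- 0) = Rabs x.
Proof. unfold cmod. rewrite <- sqrt_Rsqr_abs. unfold Rsqr. f_equal. ring. Qed.

Fixpoint thresholds (E : nat -> R) (q : nat) : R :=
  match q with
  | O => E O
  | S q' => Rmin (thresholds E q') (Rmin (E q) (/ INR q))
  end.

Section Thresholds.
Variable E : nat -> R.
Hypothesis E_pos : forall q, 0 < E q.

Lemma thresholds_pos q : 0 < thresholds E q.
Proof.
  induction q as [|q IHq]; cbn [thresholds]; [apply E_pos |].
  apply Rmin_pos; [exact IHq | apply Rmin_pos; [apply E_pos |]].
  apply Rinv_0_lt_compat, lt_0_INR. lia.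
Qed.

Lemma thresholds_le q : thresholds E q <= E q.
Proof.
  destruct q; cbn [thresholds]; [lra |].
  eapply Rle_trans; [apply Rmin_r | apply Rmin_l].
Qed.

Lemma thresholds_antitone p q : (p <= q)%nat -> thresholds E q <= thresholds E p.
Proof.
  induction 1 as [|q _ IH]; [lra |].
  cbn [thresholds]. eapply Rle_trans; [apply Rmin_l | exact IH].
Qed.

Lemma thresholds_band e :
  0 < e -> e <= thresholds E 0 ->
  exists q, e <= thresholds E q /\ thresholds E (S q) < e.
Proof.
  intros He H0. apply NNPP. intros Hnone.
  assert (Hall : forall q, e <= thresholds E q).
  { induction q as [|q IHq]; [exact H0 |].
    apply Rnot_lt_le. intros Hlt. apply Hnone. now exists q. }
  destruct (INR_archimed e 1 He) as [n Hn].
  specialize (Hall (S n)). cbn [thresholds] in Hall.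
  assert (Hsmall : / INR (S n) < e).
  { rewrite S_INR in *. pose proof (pos_INR n).
    apply Rmult_lt_reg_r with (INR n + 1); [lra |].
    rewrite Rinv_l; lra. }
  pose proof (Rmin_r (thresholds E n) (Rmin (E (S n)) (/ INR (S n)))).
  pose proof (Rmin_r (E (S n)) (/ INR (S n))). lra.
Qed.

End Thresholds.

(* A diagonal argument: [l] agrees with [x q] on the band [t (S q) < e <= t q],
   where the thresholds [t] decrease to [0] and below [t q] all the Cauchy
   bounds up to index [q] hold at once. *)
Lemma net_cauchy_limit (x d : nat -> R -> R) :
  (forall p q, (p <= q)%nat -> ev (fun e => Rabs (x q e - x p e) <= d p e)) ->
  exists l, forall p, ev (fun e => Rabs (x p e - l e) <= d p e).
Proof.
  intros Hcauchy.
  destruct (choice (fun q E => 0 < E /\ forall e, 0 < e <= 1 -> e <= E ->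
                      forall p, (p <= q)%nat -> Rabs (x q e - x p e) <= d p e))
    as [E HE].
  { intros q. apply ev_forall_le. intros p Hp. now apply Hcauchy. }
  assert (E_pos : forall q, 0 < E q) by (intros q; apply HE).
  set (t := thresholds E).
  set (Q := fun e => epsilon (inhabits 0%nat) (fun q => e <= t q /\ t (S q) < e)).
  assert (HQ : forall e, 0 < e -> e <= t 0%nat -> e <= t (Q e) /\ t (S (Q e)) < e).
  { intros e He H0. apply epsilon_spec. now apply thresholds_band. }
  exists (fun e => x (Q e) e). intros p.
  exists (t p). split; [now apply thresholds_pos |].
  intros e He Hep.
  assert (H0 : e <= t 0%nat) by (eapply Rle_trans; [exact Hep | apply thresholds_antitone; lia]).
  destruct (HQ e (proj1 He) H0) as [Hlo Hhi].
  assert (Hpq : (p <= Q e)%nat).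
  { destruct (Nat.le_gt_cases p (Q e)) as [Hle | Hgt]; [exact Hle |].
    assert (t p <= t (S (Q e))) by (apply thresholds_antitone; lia). lra. }
  rewrite Rabs_minus_sym. apply (proj2 (HE (Q e))); [exact He | | exact Hpq].
  eapply Rle_trans; [exact Hlo | apply thresholds_le].
Qed.

Section Gauge.
Variable rho : R -> R.
Hypothesis rho_gauge : gauge rho.

Lemma gauge_le_half : ev (fun e => 0 < rho e <= / 2).
Proof.
  destruct rho_gauge as [Hrange Hsmall].
  apply (ev_mono _ _ (ev_and _ _ (Hsmall (/ 2) ltac:(lra)) (ev_all _ Hrange))).
  intros e _ [Hlt Hpos]. lra.
Qed.

Lemma moderate_of_abs_le_add x y w :
  moderate rho x -> moderate rho y ->
  ev (fun e => Rabs (w e) <= Rabs (x e) + Rabs (y e)) -> moderate rho w.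
Proof.
  intros [Nx Hx] [Ny Hy] Hw. exists (Nx + Ny + 1)%nat.
  apply (ev_mono _ _ (ev_and _ _ (ev_and _ _ Hx Hy) (ev_and _ _ Hw gauge_le_half))).
  intros e _ [[Hxe Hye] [Hwe Hr]].
  assert (Hne : rho e <> 0) by lra.
  rewrite <- !pow_inv in *.
  assert (Hs : 2 <= / rho e).
  { rewrite <- (Rinv_inv 2). apply Rinv_le_contravar; lra. }
  set (s := / rho e) in *.
  assert (s ^ Nx <= s ^ (Nx + Ny)) by (apply Rle_pow; lia || lra).
  assert (s ^ Ny <= s ^ (Nx + Ny)) by (apply Rle_pow; lia || lra).
  pose proof (pow_le s (Nx + Ny) ltac:(lra)).
  rewrite pow_add, pow_1. nra.
Qed.

Lemma moderate_const c : moderate rho (fun _ => c).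
Proof.
  destruct rho_gauge as [Hrange Hsmall].
  assert (Hc : 0 < Rabs c + 1) by (pose proof (Rabs_pos c); lra).
  exists 1%nat.
  apply (ev_mono _ _ (ev_and _ _ (Hsmall (/ (Rabs c + 1)) (Rinv_0_lt_compat _ Hc))
                                (ev_all _ Hrange))).
  intros e _ [Hlt Hpos]. rewrite pow_1.
  apply Rinv_lt_contravar in Hlt.
  - rewrite Rinv_inv in Hlt. lra.
  - apply Rmult_lt_0_compat; [lra | now apply Rinv_0_lt_compat].
Qed.

Lemma hypnat_const k : hypnat rho (fun _ => k).
Proof. exact (moderate_const (INR k)). Qed.

Lemma hypnat_le_add n m k :
  hypnat rho n -> (forall e, (m e <= n e + k)%nat) -> hypnat rho m.
Proof.
  intros Hn Hmn. apply (moderate_of_abs_le_add _ _ _ Hn (moderate_const (INR k))).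
  apply ev_all. intros e _. rewrite !Rabs_right by (apply Rle_ge, pos_INR).
  rewrite <- plus_INR. apply le_INR, Hmn.
Qed.

Lemma hypnat_max n m :
  hypnat rho n -> hypnat rho m -> hypnat rho (fun e => Nat.max (n e) (m e)).
Proof.
  intros Hn Hm. apply (moderate_of_abs_le_add _ _ _ Hn Hm).
  apply ev_all. intros e _. rewrite !Rabs_right by (apply Rle_ge, pos_INR).
  rewrite <- plus_INR. apply le_INR. lia.
Qed.

Lemma gle_ev x y : gle rho x y -> forall q, ev (fun e => x e <= y e + rho e ^ q).
Proof.
  intros [z [Hz Hxy]] q.
  apply (ev_mono _ _ (ev_and _ _ Hxy (Hz q))).
  intros e _ [Hle Habs]. pose proof (Rle_abs (z e)). lra.
Qed.

Lemma hnle_ev_le M N : hnle rho M N -> ev (fun e => (M e <= N e)%nat).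
Proof.
  intros HMN. apply (ev_mono _ _ (ev_and _ _ (gle_ev _ _ HMN 1) gauge_le_half)).
  intros e _ [Hle Hr]. rewrite pow_1 in Hle.
  apply Nat.lt_succ_r, INR_lt. rewrite S_INR. lra.
Qed.

Lemma hnle_of_le M N : (forall e, (M e <= N e)%nat) -> hnle rho M N.
Proof.
  intros HMN. exists (fun _ => 0). split.
  - intros q. apply ev_all. intros e He. rewrite Rabs_R0.
    apply pow_le. pose proof (proj1 rho_gauge e He). lra.
  - apply ev_all. intros e _. rewrite Rplus_0_r. apply le_INR, HMN.
Qed.

Lemma hnle_weaken_l M M' N :
  (forall e, (M e <= M' e)%nat) -> hnle rho M' N -> hnle rho M N.
Proof.
  intros HMM' [z [Hz HM'N]]. exists z. split; [exact Hz |].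
  apply (ev_mono _ _ HM'N). intros e _ Hle. pose proof (le_INR _ _ (HMM' e)). lra.
Qed.

End Gauge.

Lemma psum_eq (a : nat -> R -> R) N e : psum a N e = sum_f_R0 (fun i => a i e) (N e).
Proof. unfold hsum, rsum, zero_net. simpl. now rewrite Nat.sub_0_r. Qed.

Lemma hsum_hs_zero N M e : hsum hs_zero N M e = 0.
Proof.
  unfold hsum, rsum, hs_zero. destruct (N e <=? M e)%nat; [| reflexivity].
  rewrite sum_cte. ring.
Qed.

Lemma sum_f_R0_sub f P N :
  (P <= N)%nat -> sum_f_R0 f N - sum_f_R0 f P = rsum f (S P) N.
Proof.
  intros HPN. unfold rsum. destruct (Nat.eq_dec P N) as [-> | Hne].
  - rewrite (proj2 (Nat.leb_gt _ _) (Nat.lt_succ_diag_r N)). ring.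
  - rewrite (proj2 (Nat.leb_le _ _)) by lia.
    rewrite (tech2 f P N) by lia. ring.
Qed.

Lemma psum_sub (a : nat -> R -> R) P N e :
  (P e <= N e)%nat -> psum a N e - psum a P e = hsum a (fun e => S (P e)) N e.
Proof. intros HPN. rewrite !psum_eq. now apply sum_f_R0_sub. Qed.

(* Shifting from [n > K] down to [n - K] is exact even when the range is empty,
   since then [n - K > m - K] as well. *)
Lemma rsum_shift f K n m :
  (K < n)%nat -> rsum (fun k => f (k + K)%nat) (n - K) (m - K) = rsum f n m.
Proof.
  intros HKn. unfold rsum. destruct (Nat.le_gt_cases n m) as [Hnm | Hmn].
  - rewrite !(proj2 (Nat.leb_le _ _)) by lia.
    replace (m - K - (n - K))%nat with (m - n)%nat by lia.
    apply sum_eq. intros i _. f_equal. lia.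
  - now rewrite !(proj2 (Nat.leb_gt _ _)) by lia.
Qed.

Lemma hsum_shift (a : nat -> R -> R) K N M e :
  (K < N e)%nat ->
  hsum (shift K a) (fun e => N e - K)%nat (fun e => M e - K)%nat e = hsum a N M e.
Proof. intros HKN. exact (rsum_shift (fun k => a k e) K _ _ HKN). Qed.

Fixpoint prefix_max (M : nat -> R -> nat) (p : nat) : R -> nat :=
  match p with
  | O => M O
  | S p' => fun e => Nat.max (prefix_max M p' e) (M p e)
  end.

Lemma prefix_max_ge M p e : (M p e <= prefix_max M p e)%nat.
Proof. destruct p; simpl; lia. Qed.

Lemma prefix_max_mono M p q e :
  (p <= q)%nat -> (prefix_max M p e <= prefix_max M q e)%nat.
Proof. induction 1; simpl; lia. Qed.

Section Hyperseries.
Variable rho : R -> R.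
Hypothesis rho_gauge : gauge rho.

Lemma hypnat_prefix_max M : (forall q, hypnat rho (M q)) -> forall p, hypnat rho (prefix_max M p).
Proof. intros HM p. induction p; simpl; [apply HM | now apply (hypnat_max _ rho_gauge)]. Qed.

Lemma hsum_ge_approx a N M :
  hs_le rho hs_zero a -> hypnat rho N -> hypnat rho M ->
  forall q, ev (fun e => - rho e ^ q <= hsum a N M e).
Proof.
  intros Ha HN HM q. apply (ev_mono _ _ (gle_ev _ _ _ (Ha N M HN HM) q)).
  intros e _ Hle. rewrite hsum_hs_zero in Hle. lra.
Qed.

Lemma hsum_le_approx_of_shift a b K P N :
  hs_le rho (shift K a) (shift K b) -> hypnat rho P -> hypnat rho N ->
  (forall e, (K < P e)%nat) ->
  forall q, ev (fun e => hsum a P N e <= hsum b P N e + rho e ^ q).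
Proof.
  intros Hab HP HN HKP q.
  assert (HPK : hypnat rho (fun e => P e - K)%nat)
    by (apply (hypnat_le_add _ rho_gauge P _ 0 HP); intros e; lia).
  assert (HNK : hypnat rho (fun e => N e - K)%nat)
    by (apply (hypnat_le_add _ rho_gauge N _ 0 HN); intros e; lia).
  apply (ev_mono _ _ (gle_ev _ _ _ (Hab _ _ HPK HNK) q)).
  intros e _ Hle. now rewrite !hsum_shift in Hle by apply HKP.
Qed.

(* The comparison costs one power of [rho]: the tail of [a] is squeezed between
   [- rho ^ S p] and the tail of [b] plus [rho ^ S p], and [2 rho <= 1]. *)
Lemma psum_diff_le_of_dominated a b K p P N :
  hs_le rho hs_zero a -> hs_le rho (shift K a) (shift K b) ->
  hypnat rho P -> hypnat rho N -> (forall e, (K <= P e)%nat) -> hnle rho P N ->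
  ev (fun e => Rabs (psum b N e - psum b P e) <= rho e ^ S p) ->
  ev (fun e => Rabs (psum a N e - psum a P e) <= rho e ^ p).
Proof.
  intros Ha Hab HP HN HKP HPN Hb.
  assert (HSP : hypnat rho (fun e => S (P e)))
    by (apply (hypnat_le_add _ rho_gauge P _ 1 HP); intros e; lia).
  apply (ev_mono _ _
    (ev_and _ _ (ev_and _ _ (hnle_ev_le _ rho_gauge _ _ HPN) Hb)
      (ev_and _ _ (ev_and _ _ (hsum_ge_approx a _ _ Ha HSP HN (S p))
                             (hsum_le_approx_of_shift a b K _ _ Hab HSP HN
                                (fun e => le_n_S _ _ (HKP e)) (S p)))
                  (gauge_le_half _ rho_gauge)))).
  intros e _ [[HPNe Hbe] [[Hlo Hhi] Hr]].
  pose proof (Rle_abs (psum b N e - psum b P e)).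
  rewrite psum_sub in * by exact HPNe.
  pose proof (pow_succ_le_half (rho e) p ltac:(lra)).
  pose proof (pow_lt (rho e) p (proj1 Hr)).
  apply Rabs_le. lra.
Qed.

Lemma hs_converges_re b :
  hs_converges rho b ->
  exists lr (M : nat -> R -> nat), (forall q, hypnat rho (M q)) /\
    forall q N, hypnat rho N -> hnle rho (M q) N ->
      ev (fun e => Rabs (psum b N e - lr e) <= rho e ^ q).
Proof.
  intros [lr [li [_ [_ Hlim]]]].
  destruct (choice _ Hlim) as [M HM].
  exists lr, M. split; [intros q; apply HM |].
  intros q N HN HMN. destruct (proj2 (HM q) N HN HMN) as [m Hm].
  apply (ev_mono _ _ (ev_and _ _ Hm (gauge_le_half _ rho_gauge))).
  intros e _ [Hlt Hr].
  pose proof (pow_lt (rho e) m (proj1 Hr)).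
  pose proof (Rabs_le_cmod (psum b N e - lr e) (- li e)). lra.
Qed.

Lemma hs_converges_of_cauchy a (P : nat -> R -> nat) :
  hs_moderate rho a -> (forall p, hypnat rho (P p)) ->
  (forall p q e, (p <= q)%nat -> (P p e <= P q e)%nat) ->
  (forall p N, hypnat rho N -> hnle rho (P p) N ->
     ev (fun e => Rabs (psum a N e - psum a (P p) e) <= rho e ^ p)) ->
  hs_converges rho a.
Proof.
  intros Hma HP Hmono Hcauchy.
  destruct (net_cauchy_limit (fun p => psum a (P p)) (fun p e => rho e ^ p)) as [l Hl].
  { intros p q Hpq. apply Hcauchy; [apply HP |].
    apply (hnle_of_le _ rho_gauge). intros e. now apply Hmono. }
  exists l, (fun _ => 0). split; [| split; [apply (moderate_const _ rho_gauge) |]].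
  - apply (moderate_of_abs_le_add _ rho_gauge _ _ _ (Hma _ (HP 0%nat))
             (moderate_const _ rho_gauge 1)).
    apply (ev_mono _ _ (Hl 0%nat)). intros e _ Hle. simpl in Hle.
    rewrite Rabs_R1. rewrite Rabs_minus_sym in Hle.
    pose proof (Rabs_triang_inv (l e) (psum a (P 0%nat) e)). lra.
  - intros q. exists (P (S (S q))). split; [apply HP |].
    intros N HN HPN. exists (S (S q)).
    apply (ev_mono _ _ (ev_and _ _ (ev_and _ _ (Hcauchy _ N HN HPN) (Hl (S (S q))))
                                  (gauge_le_half _ rho_gauge))).
    intros e _ [[HN2 Hl2] Hr]. rewrite cmod_real.
    pose proof (Rabs_triang (psum a N e - psum a (P (S (S q))) e)
                            (psum a (P (S (S q))) e - l e)).
    replace (psum a N e - psum a (P (S (S q))) e + (psum a (P (S (S q))) e - l e))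
      with (psum a N e - l e) in * by ring.
    pose proof (pow_succ_le_half (rho e) q ltac:(lra)).
    pose proof (pow_succ_le_half (rho e) (S q) ltac:(lra)).
    pose proof (pow_lt (rho e) (S (S q)) (proj1 Hr)). lra.
Qed.

Lemma hs_converges_of_dominated a b K :
  hs_moderate rho a -> hs_le rho hs_zero a -> hs_le rho (shift K a) (shift K b) ->
  hs_converges rho b -> hs_converges rho a.
Proof.
  intros Hma Ha Hab Hb.
  destruct (hs_converges_re b Hb) as [lr [M [HM Hbl]]].
  set (P := prefix_max (fun q e => Nat.max K (M (S (S q)) e))).
  assert (HP : forall p, hypnat rho (P p)).
  { apply hypnat_prefix_max. intros q.
    apply (hypnat_max _ rho_gauge); [apply (hypnat_const _ rho_gauge) | apply HM]. }
  assert (HP_ge : forall p e, (K <= P p e)%nat /\ (M (S (S p)) e <= P p e)%nat).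
  { intros p e. pose proof (prefix_max_ge (fun q e => Nat.max K (M (S (S q)) e)) p e).
    cbv beta in *. unfold P. lia. }
  apply (hs_converges_of_cauchy a P Hma HP (fun p q e => prefix_max_mono _ p q e)).
  intros p N HN HPN.
  apply (psum_diff_le_of_dominated a b K p _ _ Ha Hab (HP p) HN
           (fun e => proj1 (HP_ge p e)) HPN).
  assert (HMP : hnle rho (M (S (S p))) (P p))
    by (apply (hnle_of_le _ rho_gauge); intros e; apply HP_ge).
  assert (HMN : hnle rho (M (S (S p))) N)
    by (apply (hnle_weaken_l _ _ (P p)); [intros e; apply HP_ge | exact HPN]).
  apply (ev_mono _ _ (ev_and _ _ (ev_and _ _ (Hbl _ N HN HMN) (Hbl _ (P p) (HP p) HMP))
                                (gauge_le_half _ rho_gauge))).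
  intros e _ [[HNl HPl] Hr].
  pose proof (Rabs_triang (psum b N e - lr e) (lr e - psum b (P p) e)).
  replace (psum b N e - lr e + (lr e - psum b (P p) e))
    with (psum b N e - psum b (P p) e) in * by ring.
  rewrite Rabs_minus_sym in HPl.
  pose proof (pow_succ_le_half (rho e) (S p) ltac:(lra)). lra.
Qed.

Lemma hs_diverges_of_dominated a b K :
  hs_moderate rho a -> hs_le rho hs_zero b -> hs_le rho (shift K a) (shift K b) ->
  hs_diverges rho a -> hs_diverges rho b.
Proof.
  intros Hma Hb Hab Ha L HL.
  assert (HK : hypnat rho (fun _ => K)) by apply (hypnat_const _ rho_gauge).
  assert (HSK : hypnat rho (fun _ => S K)) by apply (hypnat_const _ rho_gauge).
  destruct (Ha (fun e => L e + psum a (fun _ => K) e)) as [M [HM HMa]].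
  { apply (moderate_of_abs_le_add _ rho_gauge _ _ _ HL (Hma _ HK)).
    apply ev_all. intros e _. apply Rabs_triang. }
  exists (fun e => Nat.max (M e) (S K)). split; [now apply (hypnat_max _ rho_gauge) |].
  intros N HN HMN.
  destruct (HMa N HN (hnle_weaken_l _ _ _ _ (fun e => Nat.le_max_l _ _) HMN)) as [m Hm].
  exists (S m).
  apply (ev_mono _ _
    (ev_and _ _ (ev_and _ _ Hm (hnle_ev_le _ rho_gauge _ _ HMN))
      (ev_and _ _ (ev_and _ _ (hsum_ge_approx b zero_net _ Hb (hypnat_const _ rho_gauge 0) HK (S (S m)))
                             (hsum_le_approx_of_shift a b K _ _ Hab HSK HN
                                (fun _ => Nat.lt_succ_diag_r K) (S (S m))))
                  (gauge_le_half _ rho_gauge)))).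
  intros e _ [[Hgt HMNe] [[Hb0 Hab0] Hr]].
  assert (HKN : (K <= N e)%nat) by lia.
  rewrite <- !(psum_sub _ (fun _ => K) N e HKN) in Hab0.
  pose proof (pow_succ_le_half (rho e) m ltac:(lra)).
  pose proof (pow_succ_le_half (rho e) (S m) ltac:(lra)).
  pose proof (pow_lt (rho e) (S m) (proj1 Hr)). lra.
Qed.

End Hyperseries.

Theorem theorem2p16 (rho : R -> R) (a b : nat -> R -> R) :
  gauge rho ->
  hs_moderate rho a -> hs_moderate rho b ->
  hs_le rho hs_zero a -> hs_le rho hs_zero b ->
  (exists K : nat, hs_le rho (shift K a) (shift K b)) ->
  (hs_converges rho b -> hs_converges rho a) /\
  (hs_diverges rho a -> hs_diverges rho b).
Proof.
  intros Hrho Hma _ Ha Hb [K Hab]. split.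
  - exact (hs_converges_of_dominated rho Hrho a b K Hma Ha Hab).
  - exact (hs_diverges_of_dominated rho Hrho a b K Hma Hb Hab).
Qed.
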